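(* Let $d\ge1$, $s_1\ge0$, $s_2\le0$, $\alpha>0$, $\beta>0$, and $g\in L^2(\mathbb{T}^d;\mathbb{C})$; set $\tilde g=g-\frac{1}{|\mathbb{T}^d|}\int_{\mathbb{T}^d}g\,dx$. Consider $$I(u,v)=\frac12\|(-\Delta)^{s_1/2}u\|^2+\frac\alpha2\|u+v-g\|^2+\frac\beta2\|R_{s_2/2}(v)\|^2$$ for $u\in H^{s_1}_0(\mathbb{T}^d;\mathbb{C})$, $v\in\dot H^{s_2}(\mathbb{T}^d;\mathbb{C})\cap L^2_0(\mathbb{T}^d;\mathbb{C})$. Then there exist $\tilde u\in H^{s_1}_0(\mathbb{T}^d;\mathbb{C})$ and $v\in\dot H^{s_2}(\mathbb{T}^d;\mathbb{C})\cap L^2_0(\mathbb{T}^d;\mathbb{C})$ such that $(\tilde u,v)$ minimizes $I$. Moreover, $u:=\tilde u+\frac{1}{|\mathbb{T}^d|}\int_{\mathbb{T}^d}g\,dx$ and $v$ satisfy $$\int_{\mathbb{T}^d}(u(x)-g(x))\,dx=\int_{\mathbb{T}^d}v(x)\,dx=0,$$ and the solution pair $(u,v)$ is unique.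
   Context: $\mathbb{T}^d=\mathbb{R}^d/(2\pi\mathbb{Z})^d$, $\|\cdot\|$ is the $L^2(\mathbb{T}^d;\mathbb{C})$ norm, $L^2_0$ the zero-mean subspace. $\hat u_k=\int_{\mathbb{T}^d}u\,e^{-ik\cdot x}dx$. Fractional Laplacian: $(-\Delta)^\sigma u=(2\pi)^{-d}\sum_{k}|k|^{2\sigma}\hat u_ke^{ik\cdot x}$; Riesz potential for $\sigma\le0$: $R_\sigma(u)=(2\pi)^{-d}\sum_{k\ne0}|k|^{2\sigma}\hat u_ke^{ik\cdot x}$. For $\sigma\ge0$, $H^\sigma_0=\{u\in L^2_0:\sum_{k\ne0}|k|^{2\sigma}|\hat u_k|^2<\infty\}$; for $\sigma<0$, $\dot H^\sigma$ is the completion of $L^2_0$ with respect to the norm $(\sum_{k\ne0}|k|^{2\sigma}|\hat u_k|^2)^{1/2}$. *)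

From mathcomp Require Import all_boot all_order all_algebra.
From mathcomp Require Import complex.
From mathcomp Require Import all_classical all_reals all_analysis.
Import Order.TTheory GRing.Theory Num.Theory.

Set Implicit Arguments.
Unset Strict Implicit.
Unset Printing Implicit Defensive.

Local Open Scope ring_scope.

Definition Zd (d : nat) := {ffun 'I_d -> int}.
Definition zeroZ (d : nat) : Zd d := [ffun=> 0%R].

Definition knorm2 (R : realType) (d : nat) (k : Zd d) : R :=
  \sum_(i < d) ((k i)%:~R) ^+ 2.

(* An element u of L^2(T^d;C) is represented by its family of Fourier
   coefficients  k |-> \hat u_k = \int_{T^d} u e^{-ik.x} dx
   (Riesz-Fischer / Plancherel identification). *)
Definition Coef (R : realType) (d : nat) := Zd d -> R[i].

Definition cabs2 (R : realType) (z : R[i]) : R :=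
  complex.Re z ^+ 2 + complex.Im z ^+ 2.

(* ||u||^2 = \int_{T^d} |u|^2 = (2 pi)^{-d} sum_k |\hat u_k|^2 (Parseval) *)
Definition L2norm2 (R : realType) (d : nat) (f : Coef R d) : \bar R :=
  (((2 * pi) ^- d)%:E * \esum_(k in [set: Zd d]) (cabs2 (f k))%:E)%E.

Definition inL2 (R : realType) (d : nat) (f : Coef R d) : Prop :=
  (\esum_(k in [set: Zd d]) (cabs2 (f k))%:E < +oo)%E.

(* u in L^2_0 : zero mean, i.e. \hat u_0 = \int u = 0 *)
Definition inL2_0 (R : realType) (d : nat) (f : Coef R d) : Prop :=
  inL2 f /\ f (zeroZ d) = 0.

Definition weighted_finite (R : realType) (d : nat) (s : R) (f : Coef R d) : Prop :=
  (\esum_(k in [set k : Zd d | k != zeroZ d])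
      (powR (knorm2 R k) s * cabs2 (f k))%:E < +oo)%E.

Definition inH0 (R : realType) (d : nat) (s : R) (f : Coef R d) : Prop :=
  inL2_0 f /\ weighted_finite s f.

(* \dot H^s (s < 0 or s <= 0) intersected with L^2_0 : an element of L^2_0
   (embedded in the completion) whose \dot H^s norm is finite *)
Definition inHdot_L2_0 (R : realType) (d : nat) (s : R) (f : Coef R d) : Prop :=
  inL2_0 f /\ weighted_finite s f.

Definition fracLap (R : realType) (d : nat) (sigma : R) (f : Coef R d) : Coef R d :=
  fun k => (powR (knorm2 R k) sigma)%:C%C * f k.

Definition riesz (R : realType) (d : nat) (sigma : R) (f : Coef R d) : Coef R d :=
  fun k => if k == zeroZ d then 0 else (powR (knorm2 R k) sigma)%:C%C * f k.

Definition torus_integral (R : realType) (d : nat) (f : Coef R d) : R[i] :=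
  f (zeroZ d).

(* (1/|T^d|) \int_{T^d} u dx, with |T^d| = (2 pi)^d *)
Definition torus_mean (R : realType) (d : nat) (f : Coef R d) : R[i] :=
  torus_integral f / ((2 * pi) ^+ d)%:C%C.

(* u + c for a constant c (constant function c has coefficients c (2pi)^d at 0) *)
Definition add_const (R : realType) (d : nat) (f : Coef R d) (c : R[i]) : Coef R d :=
  fun k => f k + (if k == zeroZ d then c * ((2 * pi) ^+ d)%:C%C else 0).

Definition coef_add_sub (R : realType) (d : nat) (u v g : Coef R d) : Coef R d :=
  fun k => u k + v k - g k.

Definition I_fun (R : realType) (d : nat) (s1 s2 alpha beta : R) (g u v : Coef R d)
  : \bar R :=
  ((2^-1)%:E * L2norm2 (fracLap (s1 / 2) u)
   + (alpha / 2)%:E * L2norm2 (coef_add_sub u v g)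
   + (beta / 2)%:E * L2norm2 (riesz (s2 / 2) v))%E.

Definition is_minimizer (R : realType) (d : nat) (s1 s2 alpha beta : R)
  (g u v : Coef R d) : Prop :=
  inH0 s1 u /\ inHdot_L2_0 s2 v /\
  forall u' v' : Coef R d, inH0 s1 u' -> inHdot_L2_0 s2 v' ->
    (I_fun s1 s2 alpha beta g u v <= I_fun s1 s2 alpha beta g u' v')%E.

From mathcomp Require Import all_boot all_order all_algebra.
From mathcomp Require Import complex.
From mathcomp Require Import all_classical all_reals all_analysis.
From mathcomp Require Import ring lra.
Import Order.TTheory GRing.Theory Num.Theory.

Set Implicit Arguments.
Unset Strict Implicit.
Unset Printing Implicit Defensive.

Local Open Scope ring_scope.

(* By Parseval, I is (2 pi)^-d / 2 times the sum over the frequencies k of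
   the density |k|^{2 s1} |u_k|^2 + alpha |u_k + v_k - g_k|^2
   + beta |k|^{2 s2} |v_k|^2, and the zero-mean constraints force
   u_0 = v_0 = 0.  For k <> 0 the density is a positive definite quadratic
   form in (u_k, v_k), so completing the square gives its unique minimiser, a
   multiple of g_k of modulus at most |g_k|.  These coefficients are square
   summable and so define the minimiser of I; a second minimiser has the same
   finite energy, hence the same density at every k, hence the same
   coefficients.  Adding the mean of g back to u makes u - g mean-free. *)

Section Cabs2.
Variable R : realType.
Implicit Types (r : R) (z : R[i]).

Lemma cabs2_ge0 z : 0 <= cabs2 z.
Proof. by rewrite /cabs2 addr_ge0 ?sqr_ge0. Qed.

Lemma cabs20 : cabs2 (0 : R[i]) = 0.
Proof. by rewrite /cabs2 /= expr0n addr0. Qed.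

Lemma cabs2N z : cabs2 (- z) = cabs2 z.
Proof. by case: z => x y; rewrite /cabs2 /= !sqrrN. Qed.

Lemma cabs2_eq0 z : (cabs2 z == 0) = (z == 0).
Proof.
case: z => x y; rewrite /cabs2 /= paddr_eq0 ?sqr_ge0 // !sqrf_eq0.
by rewrite eq_complex.
Qed.

Lemma cabs2_realMl r z : cabs2 (r%:C%C * z) = r ^+ 2 * cabs2 z.
Proof. by case: z => x y; rewrite /cabs2 /=; ring. Qed.

Lemma cabs2_realMl_le r z : 0 <= r <= 1 -> cabs2 (r%:C%C * z) <= cabs2 z.
Proof.
by case/andP=> r_ge0 r_le1; rewrite cabs2_realMl ler_piMl ?cabs2_ge0 ?expr_le1.
Qed.

End Cabs2.

Section SplittingEnergy.
Variables (R : realType) (a al b : R).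

Definition split_energy (z p q : R[i]) : R :=
  a * cabs2 p + al * cabs2 (p + q - z) + b * cabs2 q.

(* The critical point of [split_energy z]: [a p = b q = al (z - p - q)]. *)
Definition opt_u (z : R[i]) : R[i] :=
  (al * b / (a * b + al * a + al * b))%:C%C * z.
Definition opt_v (z : R[i]) : R[i] :=
  (al * a / (a * b + al * a + al * b))%:C%C * z.

Hypotheses (a_gt0 : 0 < a) (al_gt0 : 0 < al) (b_gt0 : 0 < b).

Let denom_gt0 : 0 < a * b + al * a + al * b.
Proof. by rewrite !addr_gt0 ?mulr_gt0. Qed.

Lemma split_energy_ge0 z p q : 0 <= split_energy z p q.
Proof. by rewrite /split_energy !addr_ge0 // mulr_ge0 ?cabs2_ge0 ?ltW. Qed.

Lemma split_energy0_eq0 x y : split_energy 0 x y = 0 -> x = 0 /\ y = 0.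
Proof.
rewrite /split_energy subr0 => energy0.
have := mulr_ge0 (ltW a_gt0) (cabs2_ge0 x).
have := mulr_ge0 (ltW al_gt0) (cabs2_ge0 (x + y)).
have := mulr_ge0 (ltW b_gt0) (cabs2_ge0 y).
move=> y_ge0 xy_ge0 x_ge0.
have /eqP : a * cabs2 x = 0 by lra.
have /eqP : b * cabs2 y = 0 by lra.
rewrite !mulf_eq0 !(gt_eqF a_gt0, gt_eqF b_gt0) !cabs2_eq0 /=.
by move=> /eqP -> /eqP ->.
Qed.

Lemma split_energyE z p q : split_energy z p q =
  split_energy z (opt_u z) (opt_v z) + split_energy 0 (p - opt_u z) (q - opt_v z).
Proof.
have denom_neq0 := lt0r_neq0 denom_gt0.
rewrite /split_energy /opt_u /opt_v /cabs2.
by case: z => z1 z2; case: p => p1 p2; case: q => q1 q2 /=; field.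
Qed.

Lemma split_energy_opt_le z p q :
  split_energy z (opt_u z) (opt_v z) <= split_energy z p q.
Proof. by rewrite [leRHS]split_energyE lerDl split_energy_ge0. Qed.

Lemma split_energy_opt_eq z p q :
  split_energy z p q = split_energy z (opt_u z) (opt_v z) ->
  p = opt_u z /\ q = opt_v z.
Proof.
rewrite split_energyE => /eqP; rewrite -subr_eq0 addrC addKr => /eqP.
by move=> /split_energy0_eq0[/subr0_eq -> /subr0_eq ->].
Qed.

Lemma split_energy_opt_le_data z :
  split_energy z (opt_u z) (opt_v z) <= al * cabs2 z.
Proof.
apply: le_trans (split_energy_opt_le z 0 0) _.
by rewrite /split_energy cabs20 !mulr0 !addr0 add0r sub0r cabs2N.
Qed.

Lemma weighted_opt_u_le z : a * cabs2 (opt_u z) <= al * cabs2 z.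
Proof.
apply: le_trans (split_energy_opt_le_data z); rewrite /split_energy -addrA lerDl.
by rewrite addr_ge0 // mulr_ge0 ?cabs2_ge0 ?ltW.
Qed.

Lemma weighted_opt_v_le z : b * cabs2 (opt_v z) <= al * cabs2 z.
Proof.
apply: le_trans (split_energy_opt_le_data z); rewrite /split_energy lerDr.
by rewrite addr_ge0 // mulr_ge0 ?cabs2_ge0 ?ltW.
Qed.

Lemma cabs2_opt_u_le z : cabs2 (opt_u z) <= cabs2 z.
Proof.
apply: cabs2_realMl_le.
rewrite ltW /= ?divr_gt0 ?mulr_gt0 // ler_pdivrMr // mul1r.
have := mulr_gt0 a_gt0 b_gt0; have := mulr_gt0 al_gt0 a_gt0; lra.
Qed.

Lemma cabs2_opt_v_le z : cabs2 (opt_v z) <= cabs2 z.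
Proof.
apply: cabs2_realMl_le.
rewrite ltW /= ?divr_gt0 ?mulr_gt0 // ler_pdivrMr // mul1r.
have := mulr_gt0 a_gt0 b_gt0; have := mulr_gt0 al_gt0 b_gt0; lra.
Qed.

End SplittingEnergy.

Section NonnegativeEsum.
Variables (R : realType) (T : choiceType).
Local Open Scope ereal_scope.

Lemma le_esum_subset (I J : set T) (a : T -> \bar R) :
  (I `<=` J)%classic -> \esum_(i in I) a i <= \esum_(i in J) a i.
Proof.
move=> IJ; rewrite ge_ereal_sup => //= _ [X [finX XI]] <-.
by rewrite esum_ge //; exists X => //; split => // i /XI /IJ.
Qed.

Lemma ge0_esumZl (I : set T) (c : R) (a : T -> \bar R) :
  (0 <= c)%R -> (forall i, 0 <= a i) ->
  \esum_(i in I) (c%:E * a i) = c%:E * \esum_(i in I) a i.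
Proof.
move=> c_ge0 a_ge0; rewrite /esum -ereal_supZl //; last first.
  by apply/set0P; exists 0; exists set0; [exact: fsets_set0 | rewrite fsbig_set0].
rewrite image_comp; congr ereal_sup; apply: eq_imagel => A _ /=.
by rewrite ge0_mule_fsumr.
Qed.

Lemma esum_ltry_dominated (I : set T) (f h : T -> R) (c : R) :
  (0 <= c)%R -> (forall i, 0 <= h i)%R -> (forall i, I i -> f i <= c * h i)%R ->
  \esum_(i in [set: T]) (h i)%:E < +oo -> \esum_(i in I) (f i)%:E < +oo.
Proof.
move=> c_ge0 h_ge0 fh h_fin.
apply: le_lt_trans (le_esum (b := fun i => c%:E * (h i)%:E) _) _.
  by move=> i Ii; rewrite -EFinM lee_fin fh.
apply: le_lt_trans (le_esum_subset _ (@subsetT _ I)) _.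
rewrite ge0_esumZl //.
have h_num : \esum_(i in [set: T]) (h i)%:E \is a fin_num.
  by rewrite ge0_fin_numE // esum_ge0 // => i _; rewrite lee_fin.
by rewrite -(fineK h_num) -EFinM ltry.
Qed.

Lemma esum_le_pointwise_eq (I : set T) (a b : T -> R) :
  (forall i, I i -> 0 <= a i <= b i)%R ->
  \esum_(i in I) (b i)%:E <= \esum_(i in I) (a i)%:E ->
  \esum_(i in I) (a i)%:E < +oo -> forall i, I i -> a i = b i.
Proof.
move=> ab ba a_fin; pose e i := (b i - a i)%R.
have e_ge0 i : I i -> (0 <= e i)%R by move=> /ab /andP[_]; rewrite subr_ge0.
have a_num : \esum_(i in I) (a i)%:E \is a fin_num.
  by rewrite ge0_fin_numE // esum_ge0 // => i /ab /andP[? _]; rewrite lee_fin.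
have sum_e : \esum_(i in I) (b i)%:E =
    \esum_(i in I) (a i)%:E + \esum_(i in I) (e i)%:E.
  rewrite -esumD => [|i /ab /andP[? _]|i /e_ge0]; rewrite ?lee_fin //.
  by apply: eq_esum => i _; rewrite -EFinD /e addrC subrK.
have sum_e_le0 : \esum_(i in I) (e i)%:E <= 0.
  by move: ba; rewrite sum_e -[leRHS]adde0 leeD2lE.
move=> i Ii; apply/eqP; rewrite eq_sym -subr_eq0 eq_le e_ge0 // andbT.
rewrite -lee_fin (le_trans _ sum_e_le0) // esum_ge //.
exists [set i]%classic; first by split; [exact: finite_set1 | move=> j ->].
by rewrite fsbig_set1.
Qed.

End NonnegativeEsum.

Lemma sqr_powR_half (R : realType) (x s : R) : powR x (s / 2) ^+ 2 = powR x s.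
Proof. by rewrite -powR_mulrn ?powR_ge0 // -powRrM divfK // pnatr_eq0. Qed.

Lemma knorm2_gt0 (R : realType) d (k : Zd d) : k != zeroZ d -> 0 < knorm2 R k.
Proof.
move=> k_neq0; have [i ki_neq0] : exists i, k i != 0.
  apply/existsP; apply: contraNT k_neq0; rewrite negb_exists => /forallP k0.
  by apply/eqP/ffunP => i; rewrite ffunE; apply/eqP; rewrite -[_ == _]negbK k0.
rewrite /knorm2 (bigD1 i) //=; apply: ltr_pwDl.
  by rewrite lt_def sqr_ge0 andbT sqrf_eq0 intr_eq0.
by apply: sumr_ge0 => j _; exact: sqr_ge0.
Qed.

Section FourierMinimizer.
Variables (R : realType) (d : nat) (s1 s2 al be : R) (g : Coef R d).

Definition u_weight (k : Zd d) : R := powR (knorm2 R k) s1.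
Definition v_weight (k : Zd d) : R := be * powR (knorm2 R k) s2.

Definition u_opt : Coef R d := fun k =>
  if k == zeroZ d then 0 else opt_u (u_weight k) al (v_weight k) (g k).
Definition v_opt : Coef R d := fun k =>
  if k == zeroZ d then 0 else opt_v (u_weight k) al (v_weight k) (g k).

Definition I_density (u v : Coef R d) (k : Zd d) : R :=
  cabs2 (fracLap (s1 / 2) u k) + al * cabs2 (coef_add_sub u v g k)
  + be * cabs2 (riesz (s2 / 2) v k).

Lemma u_opt_zeroZ : u_opt (zeroZ d) = 0.
Proof. by rewrite /u_opt eqxx. Qed.

Lemma v_opt_zeroZ : v_opt (zeroZ d) = 0.
Proof. by rewrite /v_opt eqxx. Qed.

Hypotheses (al_gt0 : 0 < al) (be_gt0 : 0 < be).

Lemma u_weight_gt0 k : k != zeroZ d -> 0 < u_weight k.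
Proof. by move=> k_neq0; rewrite powR_gt0 // knorm2_gt0. Qed.

Lemma v_weight_gt0 k : k != zeroZ d -> 0 < v_weight k.
Proof. by move=> k_neq0; rewrite mulr_gt0 // powR_gt0 // knorm2_gt0. Qed.

Lemma I_density_ge0 u v k : 0 <= I_density u v k.
Proof.
have := cabs2_ge0 (fracLap (s1 / 2) u k).
have := mulr_ge0 (ltW al_gt0) (cabs2_ge0 (coef_add_sub u v g k)).
have := mulr_ge0 (ltW be_gt0) (cabs2_ge0 (riesz (s2 / 2) v k)).
rewrite /I_density; lra.
Qed.

Lemma I_densityE u v k : k != zeroZ d ->
  I_density u v k = split_energy (u_weight k) al (v_weight k) (g k) (u k) (v k).
Proof.
move=> k_neq0; rewrite /I_density /fracLap /riesz (negbTE k_neq0).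
by rewrite !cabs2_realMl !sqr_powR_half mulrA.
Qed.

Lemma I_density_zeroZ u v : u (zeroZ d) = 0 -> v (zeroZ d) = 0 ->
  I_density u v (zeroZ d) = al * cabs2 (g (zeroZ d)).
Proof.
move=> u0 v0; rewrite /I_density /fracLap /riesz /coef_add_sub eqxx u0 v0.
by rewrite mulr0 add0r sub0r cabs2N !cabs20 mulr0 add0r addr0.
Qed.

Lemma I_density_opt_le u v k : u (zeroZ d) = 0 -> v (zeroZ d) = 0 ->
  I_density u_opt v_opt k <= I_density u v k.
Proof.
move=> u0 v0; have [->|k_neq0] := eqVneq k (zeroZ d).
  by rewrite !I_density_zeroZ ?u_opt_zeroZ ?v_opt_zeroZ.
rewrite !I_densityE // /u_opt /v_opt (negbTE k_neq0).
by apply: split_energy_opt_le; rewrite ?u_weight_gt0 ?v_weight_gt0.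
Qed.

Lemma I_density_opt_le_data k : I_density u_opt v_opt k <= al * cabs2 (g k).
Proof.
have [->|k_neq0] := eqVneq k (zeroZ d).
  by rewrite I_density_zeroZ ?u_opt_zeroZ ?v_opt_zeroZ.
rewrite I_densityE // /u_opt /v_opt (negbTE k_neq0).
by apply: split_energy_opt_le_data; rewrite ?u_weight_gt0 ?v_weight_gt0.
Qed.

Lemma I_density_opt_eq u v k : k != zeroZ d ->
  I_density u v k = I_density u_opt v_opt k -> u k = u_opt k /\ v k = v_opt k.
Proof.
move=> k_neq0; rewrite !I_densityE // /u_opt /v_opt (negbTE k_neq0).
by apply: split_energy_opt_eq; rewrite ?u_weight_gt0 ?v_weight_gt0.
Qed.

Lemma I_funE u v : I_fun s1 s2 al be g u v =
  (((2 * pi) ^- d / 2)%:E * \esum_(k in [set: Zd d]) (I_density u v k)%:E)%E.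
Proof.
set A := fun k => (cabs2 (fracLap (s1 / 2) u k))%:E.
set B := fun k => (cabs2 (coef_add_sub u v g k))%:E.
set C := fun k => (cabs2 (riesz (s2 / 2) v k))%:E.
have [A_ge0 B_ge0 C_ge0] : [/\ forall k, (0 <= A k)%E, forall k, (0 <= B k)%E
    & forall k, (0 <= C k)%E] by split=> k; rewrite lee_fin cabs2_ge0.
rewrite (eq_esum (b := fun k => A k + al%:E * B k + be%:E * C k)%E); last first.
  by move=> k _; rewrite /I_density !EFinD !EFinM.
rewrite !esumD => // [|k _|k _|k _]; last 3 first.
- by rewrite mule_ge0 // lee_fin ltW.
- by rewrite adde_ge0 // mule_ge0 // lee_fin ltW.
- by rewrite mule_ge0 // lee_fin ltW.
rewrite !ge0_esumZl ?ltW //.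
rewrite !ge0_muleDr ?adde_ge0 ?mule_ge0 ?esum_ge0 ?lee_fin ?ltW //.
rewrite /I_fun /L2norm2 !muleA -!EFinM.
have vol_neq0 : (2 * pi) ^+ d != 0 :> R.
  by rewrite expf_neq0 // mulf_neq0 // gt_eqF // pi_gt0.
by congr (_ + _ + _)%E; congr (_%:E * _)%E; field.
Qed.

Lemma cabs2_u_opt_le k : cabs2 (u_opt k) <= cabs2 (g k).
Proof.
rewrite /u_opt; case: ifPn => [_|k_neq0]; first by rewrite cabs20 cabs2_ge0.
by apply: cabs2_opt_u_le; rewrite ?u_weight_gt0 ?v_weight_gt0.
Qed.

Lemma cabs2_v_opt_le k : cabs2 (v_opt k) <= cabs2 (g k).
Proof.
rewrite /v_opt; case: ifPn => [_|k_neq0]; first by rewrite cabs20 cabs2_ge0.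
by apply: cabs2_opt_v_le; rewrite ?u_weight_gt0 ?v_weight_gt0.
Qed.

Lemma weighted_u_opt_le k : k != zeroZ d ->
  u_weight k * cabs2 (u_opt k) <= al * cabs2 (g k).
Proof.
move=> k_neq0; rewrite /u_opt (negbTE k_neq0).
by apply: weighted_opt_u_le; rewrite ?u_weight_gt0 ?v_weight_gt0.
Qed.

Lemma weighted_v_opt_le k : k != zeroZ d ->
  v_weight k * cabs2 (v_opt k) <= al * cabs2 (g k).
Proof.
move=> k_neq0; rewrite /v_opt (negbTE k_neq0).
by apply: weighted_opt_v_le; rewrite ?u_weight_gt0 ?v_weight_gt0.
Qed.

Hypothesis g_L2 : inL2 g.

Lemma esum_ltry_dominated_data (I : set (Zd d)) (f : Zd d -> R) (c : R) :
  0 <= c -> (forall k, I k -> f k <= c * cabs2 (g k)) ->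
  (\esum_(k in I) (f k)%:E < +oo)%E.
Proof.
by move=> c_ge0 fg; apply: esum_ltry_dominated fg g_L2 => // k; exact: cabs2_ge0.
Qed.

Lemma u_opt_H0 : inH0 s1 u_opt.
Proof.
split; [split|].
- apply: (esum_ltry_dominated_data (c := 1)) => // k _.
  by rewrite mul1r cabs2_u_opt_le.
- exact: u_opt_zeroZ.
- apply: (esum_ltry_dominated_data (c := al)) => [|k /= k_neq0]; first exact: ltW.
  exact: weighted_u_opt_le.
Qed.

Lemma v_opt_Hdot : inHdot_L2_0 s2 v_opt.
Proof.
split; [split|].
- apply: (esum_ltry_dominated_data (c := 1)) => // k _.
  by rewrite mul1r cabs2_v_opt_le.
- exact: v_opt_zeroZ.
- apply: (esum_ltry_dominated_data (c := al / be)) => [|k /= k_neq0].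
    by rewrite divr_ge0 ?ltW.
  rewrite mulrAC ler_pdivlMr // mulrAC [_ * be]mulrC.
  exact: weighted_v_opt_le.
Qed.

Lemma I_fun_scale_gt0 : 0 < (2 * pi) ^- d / 2 :> R.
Proof. by rewrite divr_gt0 // invr_gt0 exprn_gt0 // mulr_gt0 // pi_gt0. Qed.

Lemma opt_is_minimizer : is_minimizer s1 s2 al be g u_opt v_opt.
Proof.
split; [exact: u_opt_H0 | split; [exact: v_opt_Hdot |]].
move=> u v [[_ u0] _] [[_ v0] _]; rewrite !I_funE.
rewrite lee_pmul2l ?lte_fin ?I_fun_scale_gt0 //.
by apply: le_esum => k _; rewrite lee_fin I_density_opt_le.
Qed.

Lemma is_minimizer_opt u v :
  is_minimizer s1 s2 al be g u v -> u = u_opt /\ v = v_opt.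
Proof.
move=> [[[_ u0] _] [[[_ v0] _] u_min]].
have := u_min _ _ u_opt_H0 v_opt_Hdot.
rewrite !I_funE lee_pmul2l ?lte_fin ?I_fun_scale_gt0 // => le_opt.
have opt_fin : (\esum_(k in [set: Zd d]) (I_density u_opt v_opt k)%:E < +oo)%E.
  apply: (esum_ltry_dominated_data (c := al)) => [|k _]; first exact: ltW.
  exact: I_density_opt_le_data.
have eq_density k : I_density u v k = I_density u_opt v_opt k.
  apply/esym/(esum_le_pointwise_eq _ le_opt opt_fin) => // j _.
  by rewrite I_density_ge0 I_density_opt_le.
split; apply/funext => k; have [->|k_neq0] := eqVneq k (zeroZ d);
  rewrite ?u0 ?v0 ?u_opt_zeroZ ?v_opt_zeroZ //;
  by have [] := I_density_opt_eq k_neq0 (eq_density k).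
Qed.

End FourierMinimizer.

Lemma mean_shift_integral (R : realType) d (u g : Coef R d) : u (zeroZ d) = 0 ->
  torus_integral (coef_add_sub (add_const u (torus_mean g)) (fun _ => 0) g) = 0.
Proof.
move=> u0; have vol_neq0 : ((2 * pi) ^+ d)%:C%C != 0 :> R[i].
  by rewrite eq_complex /= eqxx andbT expf_neq0 // mulf_neq0 // gt_eqF // pi_gt0.
rewrite /torus_integral /coef_add_sub /add_const /torus_mean /torus_integral.
by rewrite eqxx u0 add0r addr0 divfK // subrr.
Qed.

Theorem theorem7 (R : realType) (d : nat) (hd : (1 <= d)%N)
  (s1 s2 alpha beta : R) (hs1 : 0 <= s1) (hs2 : s2 <= 0)
  (halpha : 0 < alpha) (hbeta : 0 < beta)
  (g : Coef R d) (hg : inL2 g) :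
  (exists (ut v : Coef R d), is_minimizer s1 s2 alpha beta g ut v)
  /\ (forall ut v : Coef R d, is_minimizer s1 s2 alpha beta g ut v ->
        let u := add_const ut (torus_mean g) in
        torus_integral (coef_add_sub u (fun _ => 0) g) = 0 /\
        torus_integral v = 0)
  /\ (forall ut1 v1 ut2 v2 : Coef R d,
        is_minimizer s1 s2 alpha beta g ut1 v1 ->
        is_minimizer s1 s2 alpha beta g ut2 v2 ->
        add_const ut1 (torus_mean g) = add_const ut2 (torus_mean g) /\ v1 = v2).
Proof.
have opt_unique := is_minimizer_opt halpha hbeta hg.
split; first by exists (u_opt s1 s2 alpha beta g), (v_opt s1 s2 alpha beta g);
  exact: opt_is_minimizer.
split=> [ut v [[[_ ut0] _] [[[_ v0] _] _]] |
         ut1 v1 ut2 v2 /opt_unique[-> ->] /opt_unique[-> ->]] //.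
by split; [exact: mean_shift_integral | exact: v0].
Qed.
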